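(* Let $H=(V,E)$ be a hypergraph. Then: (1) $H$ has an Euler family if and only if each block of $H$ has an Euler family. (2) $H$ has an Euler tour if and only if each block $B$ of $H$ has an Euler tour that traverses (as an anchor) every separating vertex of $H$ contained in $B$.
   Context: A hypergraph $H=(V,E)$ consists of a finite nonempty vertex set $V$, a finite edge set $E$ disjoint from $V$, and an incidence function assigning to each edge $e\in E$ a subset of $V$ (also denoted $e$); distinct edges may have the same vertex set. Hypergraphs are assumed to have no empty edges. A hypersubgraph of $H$ is a hypergraph $(V',E')$ with $V'\subseteq V$, $E'\subseteq E$ (each $e\in E'$ contained in $V'$). $H$ decomposes into hypersubgraphs $H_1,H_2$ if $E$ is the disjoint union of $E(H_1)$ and $E(H_2)$. A walk is a sequence $W=v_0e_1v_1e_2\cdots e_kv_k$ with $v_i\in V$, $e_i\in E$, such that for each $i$, $v_{i-1}\ne v_i$ and $v_{i-1},v_i\in e_i$; the $v_i$ are its anchors. $W$ is closed if $k\ge 2$ and $v_0=v_k$; it is a strict trail if $e_1,\dots,e_k$ are pairwise distinct. A hypergraph is connected if any two distinct vertices are joined by a walk. An Euler tour is a closed strict trail traversing every edge; an Euler family is a family of closed strict trails such that every edge lies in exactly one trail and no two trails have a common anchor. In a connected hypergraph $H$, a vertex $v$ is a separating vertex if $H$ decomposes into two connected hypersubgraphs $H_1,H_2$, each with at least one edge, with $V(H_1)\cap V(H_2)=\{v\}$; for general $H$, separating vertices are those of its connected components. A hypergraph is non-separable if it is connected, has no empty edges, and has no separating vertex; a block of $H$ is a maximal non-separable hypersubgraph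 of $H$.
   Formalization: Part (2), on Euler tours, is asserted only for connected H, while part (1) is kept for arbitrary H. Apart from conventions, each condition added here is assumed in the paper as well or is needed for the statement above to hold. *)

From mathcomp Require Import all_boot.
Set Implicit Arguments. Unset Strict Implicit. Unset Printing Implicit Defensive.

(* Hypersubgraphs (and the
   hypergraph itself, with VS = setT, ES = setT) are described by a pair
   (VS, ES) of a vertex set and an edge set. *)

Section Hyp.
Variables (V E : finType) (inc : E -> {set V}).

Definition subhyp (VH : {set V}) (EH : {set E}) (VS : {set V}) (ES : {set E}) : Prop :=
  [/\ VS \subset VH, ES \subset EH, VS != set0 &
      forall e, e \in ES -> inc e \subset VS].

(* A walk v0 e1 v1 ... ek vk is represented as (v0, [:: (e1,v1); ...; (ek,vk)]). *)
Definition walk := (V * seq (E * V))%type.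

Definition anchors (w : walk) : seq V := w.1 :: map snd w.2.
Definition wedges (w : walk) : seq E := map fst w.2.
Definition wlast (w : walk) : V := last w.1 (map snd w.2).

Fixpoint walk_from (VS : {set V}) (ES : {set E}) (u : V) (s : seq (E * V)) : bool :=
  match s with
  | [::] => true
  | (e, v) :: s' =>
      [&& u != v, u \in inc e, v \in inc e, e \in ES, v \in VS & walk_from VS ES v s']
  end.

Definition is_walk (VS : {set V}) (ES : {set E}) (w : walk) : Prop :=
  w.1 \in VS /\ walk_from VS ES w.1 w.2.

Definition closed_walk (w : walk) : Prop := 2 <= size w.2 /\ wlast w = w.1.

Definition strict_trail (w : walk) : Prop := uniq (wedges w).

Definition closed_strict_trail (VS : {set V}) (ES : {set E}) (w : walk) : Prop :=
  [/\ is_walk VS ES w, closed_walk w & strict_trail w].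

Definition euler_tour (VS : {set V}) (ES : {set E}) (w : walk) : Prop :=
  closed_strict_trail VS ES w /\ forall e, e \in ES -> e \in wedges w.

Definition euler_family (VS : {set V}) (ES : {set E}) (F : seq walk) : Prop :=
  [/\ (forall w, w \in F -> closed_strict_trail VS ES w),
      (forall e, e \in ES -> count (fun w => e \in wedges w) F = 1) &
      pairwise (fun w1 w2 => ~~ has (fun x => x \in anchors w2) (anchors w1)) F].

Definition has_euler_tour VS ES : Prop := exists w, euler_tour VS ES w.
Definition has_euler_family VS ES : Prop := exists F, euler_family VS ES F.

Definition joined (VS : {set V}) (ES : {set E}) (u x : V) : Prop :=
  exists s, is_walk VS ES (u, s) /\ wlast (u, s) = x.

Definition connected (VS : {set V}) (ES : {set E}) : Prop :=
  forall u x, u \in VS -> x \in VS -> u != x -> joined VS ES u x.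

Definition separating_conn (VS : {set V}) (ES : {set E}) (v : V) : Prop :=
  exists (V1 V2 : {set V}) (E1 E2 : {set E}),
    [/\ subhyp VS ES V1 E1 /\ subhyp VS ES V2 E2,
        E1 :&: E2 = set0 /\ E1 :|: E2 = ES,
        E1 != set0 /\ E2 != set0,
        V1 :&: V2 = [set v] &
        connected V1 E1 /\ connected V2 E2].

(* Separating vertex of a general hypergraph: separating vertex of the
   connected component containing it. *)
Definition separating (VS : {set V}) (ES : {set E}) (v : V) : Prop :=
  v \in VS /\
  exists C : {set V},
    (forall x, x \in C <-> (x \in VS /\ (x = v \/ joined VS ES v x))) /\
    separating_conn C [set e in ES | inc e \subset C] v.

Definition nonseparable (VS : {set V}) (ES : {set E}) : Prop :=
  [/\ connected VS ES,
      (forall e, e \in ES -> inc e != set0) &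
      forall v, ~ separating_conn VS ES v].

Definition block (VS : {set V}) (ES : {set E}) (VB : {set V}) (EB : {set E}) : Prop :=
  [/\ subhyp VS ES VB EB, nonseparable VB EB &
      forall (V' : {set V}) (E' : {set E}), subhyp VS ES V' E' -> nonseparable V' E' ->
        VB \subset V' -> EB \subset E' -> V' = VB /\ E' = EB].

End Hyp.

From mathcomp Require Import all_boot.
From Stdlib Require Import Classical ClassicalEpsilon.
Set Implicit Arguments. Unset Strict Implicit. Unset Printing Implicit Defensive.

(* Separation is handled through the relation "two edges share a vertex other
   than z": in a connected hypergraph, z is a separating vertex iff this
   relation does not connect all edges.  Two blocks share no edge, and a walk
   that leaves a block returns to the vertex where it left: otherwise the
   excursion, shortened to a path, could be added to the block as an ear
   without creating a separating vertex.  Hence a closed strict trail through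
   an edge of a block restricts to a closed strict trail of the block, which
   gives the forward implications; a separating vertex missed by an Euler tour
   would leave all edges linked through other vertices.  Conversely, the
   trails of the blocks are spliced at common anchors into anchor-disjoint
   trails.  For tours a single trail remains: where a walk leaves one of these
   trails, two blocks meet in a separating vertex, which is an anchor of the
   tours of both blocks and hence of both trails. *)

Section Hypergraph.
Variables (V E : finType) (inc : E -> {set V}).
Hypothesis Hnoempty : forall e, inc e != set0.

Local Notation wf := (walk_from inc).
Implicit Types (VS W VB : {set V}) (ES S EB : {set E}) (u x y z q v : V) (e f g h : E).
Implicit Types (s : seq (E * V)) (t T : walk V E).

Lemma walk_from_cat VS ES u s1 s2 :
  wf VS ES u (s1 ++ s2) = wf VS ES u s1 && wf VS ES (last u (map snd s1)) s2.
Proof.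
elim: s1 u => [|[e v] s1 IH] u //=.
by rewrite IH !andbA.
Qed.

Lemma walk_from_sub VS ES (VS' : {set V}) (ES' : {set E}) u s :
  VS \subset VS' -> ES \subset ES' -> wf VS ES u s -> wf VS' ES' u s.
Proof.
move=> sV sE; elim: s u => [|[e v] s IH] u //=.
case/and5P=> -> -> -> /(subsetP sE) -> /andP [/(subsetP sV) -> /IH ->].
by [].
Qed.

Definition reach VS ES u x := exists s, wf VS ES u s /\ last u (map snd s) = x.

Lemma reach_refl VS ES u : reach VS ES u u.
Proof. by exists [::]. Qed.

Lemma reach_trans VS ES u x y : reach VS ES u x -> reach VS ES x y -> reach VS ES u y.
Proof.
move=> [s1 [w1 l1]] [s2 [w2 l2]]; exists (s1 ++ s2); split.
  by rewrite walk_from_cat w1 l1 w2.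
by rewrite map_cat last_cat l1.
Qed.

Lemma reach_edge VS ES e u x :
  e \in ES -> u \in inc e -> x \in inc e -> x \in VS -> reach VS ES u x.
Proof.
move=> eE ue xe xV; case: (eqVneq u x) => [->|ux]; first exact: reach_refl.
by exists [:: (e, x)]; rewrite /= ux ue xe eE xV.
Qed.

Lemma reach_sub VS ES (VS' : {set V}) (ES' : {set E}) u x :
  VS \subset VS' -> ES \subset ES' -> reach VS ES u x -> reach VS' ES' u x.
Proof. by move=> sV sE [s [w l]]; exists s; split => //; apply: walk_from_sub w. Qed.

Lemma reach_sym VS ES u x : u \in VS -> reach VS ES u x -> reach VS ES x u.
Proof.
move=> uV [s [w <-]]; elim: s u uV w => [|[e v] s IH] u uV /=.
  by move=> _; exact: reach_refl.
case/and5P=> uv ue ve eE /andP [vV w].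
apply: reach_trans (IH v vV w) _.
exact: reach_edge ve ue uV.
Qed.

Lemma reach_connected VS ES :
  (forall u x, u \in VS -> x \in VS -> reach VS ES u x) -> connected inc VS ES.
Proof.
move=> H u x uV xV _; have [s [w l]] := H u x uV xV.
by exists s; split.
Qed.

Lemma connected_reach VS ES u x : connected inc VS ES -> u \in VS -> x \in VS -> reach VS ES u x.
Proof.
move=> C uV xV; case: (eqVneq u x) => [->|ux]; first exact: reach_refl.
by have [s [[_ w] l]] := C u x uV xV ux; exists s.
Qed.

Lemma reach_walk_edge VS ES u s q e :
  (forall e, e \in ES -> inc e \subset VS) ->
  wf VS ES u s -> e \in map fst s -> q \in inc e -> reach VS ES u q.
Proof.
move=> EV; elim: s u => [|[e' v] s IH] u //=.
case/and5P=> uv ue ve eE /andP [vV w]; rewrite inE => /orP [/eqP ->|es] qe.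
  by apply: (reach_edge eE ue qe); exact: (subsetP (EV _ eE)).
apply: reach_trans (IH v w es qe).
exact: reach_edge ue ve vV.
Qed.

Definition adj_off ES z : rel E := fun e f =>
  [&& e \in ES, f \in ES & [exists x, [&& x != z, x \in inc e & x \in inc f]]].
Definition linked_off ES z := forall e f, e \in ES -> f \in ES -> connect (adj_off ES z) e f.

Lemma adj_offI ES z e f x : e \in ES -> f \in ES -> x != z -> x \in inc e -> x \in inc f ->
  adj_off ES z e f.
Proof.
by move=> eE fE xz xe xf; rewrite /adj_off eE fE /=; apply/existsP; exists x; rewrite xz xe xf.
Qed.

Lemma adj_offP ES z e f : adj_off ES z e f ->
  [/\ e \in ES, f \in ES & exists x, [/\ x != z, x \in inc e & x \in inc f]].
Proof.
case/and3P=> eE fE /existsP [x /and3P [xz xe xf]]; split => //; by exists x.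
Qed.

Lemma adj_off_sym ES z : symmetric (adj_off ES z).
Proof.
move=> e f; apply/idP/idP => /adj_offP [eE fE [x [xz xe xf]]]; exact: (adj_offI _ _ xz).
Qed.

Lemma connect_adj_off_sym ES z e f : connect (adj_off ES z) e f = connect (adj_off ES z) f e.
Proof. exact: (sym_connect_sym (adj_off_sym ES z)). Qed.

Lemma connect_adj_off_sub ES (ES' : {set E}) z e f : ES \subset ES' ->
  connect (adj_off ES z) e f -> connect (adj_off ES' z) e f.
Proof.
move=> sE; apply: connect_sub => a b /adj_offP [aE bE [x [xz xa xb]]].
apply: connect1; apply: (adj_offI _ _ xz) => //; exact: (subsetP sE).
Qed.

Lemma connect_adj_off_closed (S ES : {set E}) z a b :
  (forall a b, a \in S -> adj_off ES z a b -> b \in S) ->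
  a \in S -> connect (adj_off ES z) a b -> b \in S.
Proof.
move=> cl aS /connectP [p pp ->]; elim: p a aS pp => [|c p IH] a aS //=.
by case/andP=> r pp; apply: (IH c (cl _ _ aS r) pp).
Qed.

Lemma reach_path_adj_off W S ES z p g x y :
  (forall a b, a \in S -> adj_off ES z a b -> b \in S) ->
  (forall a, a \in S -> inc a \subset W) ->
  path (adj_off ES z) g p -> g \in S -> x \in inc g -> y \in inc (last g p) -> reach W S x y.
Proof.
move=> cl SW; elim: p g x => [|g' p IH] g x /=.
  move=> _ gS xg yg; exact: (reach_edge gS xg yg (subsetP (SW g gS) y yg)).
case/andP=> r pp gS xg yl.
case/adj_offP: (r) => _ _ [s [_ sg sg']].
have g'S := cl _ _ gS r.
apply: reach_trans (IH g' s pp g'S sg' yl).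
exact: (reach_edge gS xg sg (subsetP (SW g gS) s sg)).
Qed.

Lemma reach_connect_adj_off W S ES z g h x y :
  (forall a b, a \in S -> adj_off ES z a b -> b \in S) ->
  (forall a, a \in S -> inc a \subset W) ->
  connect (adj_off ES z) g h -> g \in S -> x \in inc g -> y \in inc h -> reach W S x y.
Proof. by move=> cl SW /connectP [p pp ->] gS xg; exact: reach_path_adj_off cl SW pp gS xg. Qed.

Lemma walk_boundary_edges VS ES S u s g0 h0 :
  wf VS ES u s -> g0 \in S -> u \in inc g0 -> h0 \in ES -> h0 \notin S ->
  last u (map snd s) \in inc h0 ->
  exists x g h, [/\ g \in S, h \in ES, h \notin S, x \in inc g & x \in inc h].
Proof.
elim: s u g0 => [|[e v] s IH] u g0 /=.
  by move=> _ g0S ug0 h0E h0S uh0; exists u, g0, h0.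
case/and5P=> uv ue ve eE /andP [vV w] g0S ug0 h0E h0S l.
case: (boolP (e \in S)) => eS.
  exact: (IH v e w eS ve h0E h0S l).
by exists u, g0, e.
Qed.

Lemma separating_conn_not_linked_off VS ES z : separating_conn inc VS ES z -> ~ linked_off ES z.
Proof.
move=> [V1 [V2 [E1 [E2 [[s1 s2] [i u] [n1 n2] I12 _]]]]] L.
case: s1 => _ sE1 _ EV1; case: s2 => _ sE2 _ EV2.
case/set0Pn: n1 => e0 e0E1; case/set0Pn: n2 => f0 f0E2.
have e0E : e0 \in ES by rewrite -u inE e0E1.
have f0E : f0 \in ES by rewrite -u inE f0E2 orbT.
have cl : forall a b, a \in E1 -> adj_off ES z a b -> b \in E1.
  move=> a b aE1 /adj_offP [_ bE [x [xz xa xb]]].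
  move: bE; rewrite -u inE => /orP [//|bE2].
  have : x \in V1 :&: V2 by rewrite inE (subsetP (EV1 _ aE1)) // (subsetP (EV2 _ bE2)).
  by rewrite I12 inE (negbTE xz).
have := connect_adj_off_closed cl e0E1 (L e0 f0 e0E f0E).
move=> f0E1; have : f0 \in E1 :&: E2 by rewrite inE f0E1.
by rewrite i inE.
Qed.

Lemma connect_adj_off_to VS ES z g h :
  (forall e, e \in ES -> inc e \subset VS) -> connected inc VS ES ->
  g \in ES -> h \in ES -> ~~ connect (adj_off ES z) g h ->
  exists g', connect (adj_off ES z) g g' /\ z \in inc g'.
Proof.
move=> EV C gE hE ngh.
set Sg := [set g' in ES | connect (adj_off ES z) g g'].
case/set0Pn: (Hnoempty g) => a ag; case/set0Pn: (Hnoempty h) => b bh.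
have [s [w l]] := connected_reach C (subsetP (EV g gE) a ag) (subsetP (EV h hE) b bh).
have gSg : g \in Sg by rewrite inE gE connect0.
have hSg : h \notin Sg by rewrite inE hE /= (negbTE ngh).
have bh' : last a (map snd s) \in inc h by rewrite l.
have [x [g1 [h1 [g1S h1E h1S xg1 xh1]]]] := walk_boundary_edges w gSg ag hE hSg bh'.
move: g1S; rewrite inE => /andP [g1E cgg1].
case: (eqVneq x z) => [xz|xz].
  by exists g1; split => //; rewrite -xz.
move: h1S; rewrite inE h1E /= => /negP; case.
apply: connect_trans cgg1 (connect1 _); exact: (adj_offI _ _ xz).
Qed.

Section SplitAtVertex.
Variables (VS : {set V}) (ES : {set E}) (z : V) (e0 f0 : E).
Hypotheses (EV : forall e, e \in ES -> inc e \subset VS) (conn : connected inc VS ES).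
Hypotheses (e0E : e0 \in ES) (f0E : f0 \in ES) (e0f0 : ~~ connect (adj_off ES z) e0 f0).

Let E1 := [set g in ES | connect (adj_off ES z) e0 g].
Let E2 := ES :\: E1.
Let V1 := \bigcup_(g in E1) inc g.
Let V2 := \bigcup_(g in E2) inc g.

Let E1E a : a \in E1 -> a \in ES. Proof. by rewrite inE => /andP []. Qed.
Let E2E a : a \in E2 -> a \in ES. Proof. by rewrite inE => /andP []. Qed.
Let e0E1 : e0 \in E1. Proof. by rewrite inE e0E connect0. Qed.
Let f0E2 : f0 \in E2. Proof. by rewrite !inE f0E /= (negbTE e0f0). Qed.

Let E1_closed a b : a \in E1 -> adj_off ES z a b -> b \in E1.
Proof.
rewrite !inE => /andP [_ e0a] ab; case/adj_offP: (ab) => _ -> _.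
exact: connect_trans e0a (connect1 ab).
Qed.

Let E2_closed a b : a \in E2 -> adj_off ES z a b -> b \in E2.
Proof.
move=> aE2 ab; case/adj_offP: (ab) => _ bE _.
rewrite inE bE andbT; apply/negP => bE1.
have : a \in E1 by apply: E1_closed bE1 _; rewrite adj_off_sym.
by move: aE2; rewrite inE => /andP [/negP].
Qed.

Let inc_V1 g : g \in E1 -> inc g \subset V1.
Proof. by move=> gE; apply/subsetP => x xg; apply/bigcupP; exists g. Qed.
Let inc_V2 g : g \in E2 -> inc g \subset V2.
Proof. by move=> gE; apply/subsetP => x xg; apply/bigcupP; exists g. Qed.

Let common_vertex x g h : g \in E1 -> h \in E2 -> x \in inc g -> x \in inc h -> x = z.
Proof.
move=> gE1 hE2 xg xh; apply/eqP/negPn/negP => xz.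
have : h \in E1 by apply: (E1_closed gE1); exact: (adj_offI (E1E gE1) (E2E hE2) xz xg xh).
by move: hE2; rewrite inE => /andP [/negP].
Qed.

Let E1_meets : exists2 g, g \in E1 & z \in inc g.
Proof.
have [g [e0g zg]] := connect_adj_off_to EV conn e0E f0E e0f0.
by exists g => //; exact: (connect_adj_off_closed E1_closed e0E1 e0g).
Qed.

Let E2_meets g : g \in E2 -> exists g', [/\ connect (adj_off ES z) g g', g' \in E2 & z \in inc g'].
Proof.
move=> gE2; have ge0 : ~~ connect (adj_off ES z) g e0.
  by move: (gE2); rewrite !inE (E2E gE2) andbT connect_adj_off_sym.
have [g' [gg' zg']] := connect_adj_off_to EV conn (E2E gE2) e0E ge0.
by exists g'; split => //; exact: (connect_adj_off_closed E2_closed gE2 gg').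
Qed.

Let V1_connected : connected inc V1 E1.
Proof.
apply: reach_connected => u x /bigcupP [g gE1 ug] /bigcupP [h hE1 xh].
apply: (reach_connect_adj_off E1_closed inc_V1 _ gE1 ug xh).
move: gE1 hE1; rewrite !inE => /andP [_ e0g] /andP [_ e0h].
by apply: connect_trans e0h; rewrite connect_adj_off_sym.
Qed.

Let V2_connected : connected inc V2 E2.
Proof.
have reach_z u : u \in V2 -> reach V2 E2 u z.
  move=> /bigcupP [g gE2 ug]; have [g' [gg' _ zg']] := E2_meets gE2.
  exact: (reach_connect_adj_off E2_closed inc_V2 gg' gE2 ug zg').
apply: reach_connected => u x uV xV; apply: reach_trans (reach_z u uV) _.
exact: reach_sym xV (reach_z x xV).
Qed.

Let V1_cap_V2 : V1 :&: V2 = [set z].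
Proof.
apply/setP => x; rewrite !inE; apply/idP/eqP.
  by case/andP => /bigcupP [g gE1 xg] /bigcupP [h hE2 xh]; exact: common_vertex xg xh.
move=> ->; have [g gE1 zg] := E1_meets; have [h [_ hE2 zh]] := E2_meets f0E2.
by rewrite (subsetP (inc_V1 gE1)) // (subsetP (inc_V2 hE2)).
Qed.

Lemma not_linked_off_separating_conn : separating_conn inc VS ES z.
Proof.
have sub_VS (F : {set E}) : F \subset ES -> \bigcup_(g in F) inc g \subset VS.
  by move=> sF; apply/bigcupsP => g /(subsetP sF); exact: EV.
have neq0 g (F : {set E}) : g \in F -> \bigcup_(g in F) inc g != set0.
  move=> gF; case/set0Pn: (Hnoempty g) => x xg.
  by apply/set0Pn; exists x; apply/bigcupP; exists g.
have sE1 : E1 \subset ES by apply/subsetP => a; exact: E1E.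
have sE2 : E2 \subset ES by exact: subsetDl.
exists V1, V2, E1, E2; split.
- split; split; [exact: sub_VS | by [] | exact: neq0 e0E1 | exact: inc_V1 |
                 exact: sub_VS | by [] | exact: neq0 f0E2 | exact: inc_V2].
- by rewrite /E2; split; [rewrite setDE setICA setICr setI0 | rewrite -{1}(setIidPr sE1) setID].
- by split; apply/set0Pn; [exists e0 | exists f0].
- exact: V1_cap_V2.
- exact: (conj V1_connected V2_connected).
Qed.

End SplitAtVertex.

Lemma nonseparable_linked_off VS ES z : (forall e, e \in ES -> inc e \subset VS) ->
  nonseparable inc VS ES -> linked_off ES z.
Proof.
move=> EV [C _ NS] e f eE fE; apply/negPn/negP => ne.
exact: (NS z (not_linked_off_separating_conn EV C eE fE ne)).
Qed.

Lemma linked_off_nonseparable VS ES : connected inc VS ES -> (forall z, linked_off ES z) ->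
  nonseparable inc VS ES.
Proof.
move=> C L; split => // z S.
exact: (separating_conn_not_linked_off S (L z)).
Qed.

Lemma nonseparable_edge e : nonseparable inc (inc e) [set e].
Proof.
apply: linked_off_nonseparable.
  apply: reach_connected => u x ue xe; exact: (reach_edge (set11 e) ue xe xe).
by move=> z a b; rewrite !inE => /eqP -> /eqP ->; exact: connect0.
Qed.

Lemma nonseparable_vertex v : nonseparable inc [set v] set0.
Proof.
apply: linked_off_nonseparable.
  by apply: reach_connected => u x; rewrite !inE => /eqP -> /eqP ->; exact: reach_refl.
by move=> z a b; rewrite inE.
Qed.

Lemma subhypT VB EB : VB != set0 -> (forall e, e \in EB -> inc e \subset VB) ->
  subhyp inc setT setT VB EB.
Proof. by move=> n EV; split => //; apply: subsetT. Qed.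

Lemma block_inc_sub VB EB : block inc setT setT VB EB -> forall e, e \in EB -> inc e \subset VB.
Proof. by case=> [[]]. Qed.

Lemma card_setC_proper (T : finType) (A B : {set T}) : A \proper B -> #|~: B| < #|~: A|.
Proof. by move=> AB; apply: proper_card; rewrite properE !setCS -properE. Qed.

Lemma nonseparable_sub_block (V0 : {set V}) (E0 : {set E}) :
  subhyp inc setT setT V0 E0 -> nonseparable inc V0 E0 ->
  exists VB EB, [/\ block inc setT setT VB EB, V0 \subset VB & E0 \subset EB].
Proof.
have [n] := ubnP (#|~: V0| + #|~: E0|); elim: n V0 E0 => // n IH V0 E0 le sh ns.
apply: NNPP => nomax; apply: (nomax); exists V0, E0; split => //.
split => // V' E' sh' ns' sV sE; apply: NNPP => neq; apply: (nomax).
have lt : #|~: V'| + #|~: E'| < #|~: V0| + #|~: E0|.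
  have leE : #|~: E'| <= #|~: E0| by rewrite subset_leq_card // setCS.
  case: (eqVneq V0 V') => [eqV|neV].
    have neE : E0 != E' by apply/eqP => eqE; apply: neq; split.
    by rewrite eqV ltn_add2l; apply: card_setC_proper; rewrite properEneq neE.
  by rewrite -addSn leq_add //; apply: card_setC_proper; rewrite properEneq neV.
have [VB [EB [bB sVB sEB]]] := IH V' E' (leq_trans lt le) sh' ns'.
by exists VB, EB; split; [| exact: subset_trans sV sVB | exact: subset_trans sE sEB].
Qed.

Lemma block_of_edge e : exists VB EB, block inc setT setT VB EB /\ e \in EB.
Proof.
have sh : subhyp inc setT setT (inc e) [set e].
  by apply: subhypT => // a; rewrite inE => /eqP ->.
have [VB [EB [bB _ s2]]] := nonseparable_sub_block sh (nonseparable_edge e).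
by exists VB, EB; split => //; apply: (subsetP s2); rewrite inE.
Qed.

Lemma block_of_vertex v : exists VB EB, block inc setT setT VB EB /\ v \in VB.
Proof.
have sh : subhyp inc setT setT [set v] set0.
  by apply: subhypT => [|a]; [apply/set0Pn; exists v; rewrite inE | rewrite inE].
have [VB [EB [bB s1 _]]] := nonseparable_sub_block sh (nonseparable_vertex v).
by exists VB, EB; split => //; apply: (subsetP s1); rewrite inE.
Qed.

Lemma connectedU (V1 V2 : {set V}) (E1 E2 : {set E}) y :
  connected inc V1 E1 -> connected inc V2 E2 ->
  y \in V1 -> y \in V2 -> connected inc (V1 :|: V2) (E1 :|: E2).
Proof.
move=> C1 C2 y1 y2.
have reach_y u : u \in V1 :|: V2 -> reach (V1 :|: V2) (E1 :|: E2) u y.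
  rewrite inE => /orP [uV|uV].
    exact: reach_sub (subsetUl _ _) (subsetUl _ _) (connected_reach C1 uV y1).
  exact: reach_sub (subsetUr _ _) (subsetUr _ _) (connected_reach C2 uV y2).
apply: reach_connected => u x uV xV; apply: reach_trans (reach_y u uV) _.
exact: reach_sym xV (reach_y x xV).
Qed.

Lemma linked_offU (E1 E2 : {set E}) z e : linked_off E1 z -> linked_off E2 z ->
  e \in E1 -> e \in E2 -> linked_off (E1 :|: E2) z.
Proof.
move=> L1 L2 e1 e2.
have to_e a : a \in E1 :|: E2 -> connect (adj_off (E1 :|: E2) z) a e.
  rewrite inE => /orP [aE|aE].
    exact: connect_adj_off_sub (subsetUl _ _) (L1 _ _ aE e1).
  exact: connect_adj_off_sub (subsetUr _ _) (L2 _ _ aE e2).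
move=> a b aE bE; apply: connect_trans (to_e a aE) _.
by rewrite connect_adj_off_sym; apply: to_e.
Qed.

Lemma nonseparableU (V1 V2 : {set V}) (E1 E2 : {set E}) e :
  (forall a, a \in E1 -> inc a \subset V1) -> (forall a, a \in E2 -> inc a \subset V2) ->
  nonseparable inc V1 E1 -> nonseparable inc V2 E2 -> e \in E1 -> e \in E2 ->
  nonseparable inc (V1 :|: V2) (E1 :|: E2).
Proof.
move=> EV1 EV2 ns1 ns2 e1 e2; have [C1 _ _] := ns1; have [C2 _ _] := ns2.
case/set0Pn: (Hnoempty e) => y ye.
apply: linked_off_nonseparable.
  exact: connectedU C1 C2 (subsetP (EV1 e e1) y ye) (subsetP (EV2 e e2) y ye).
move=> z; exact: linked_offU (nonseparable_linked_off z EV1 ns1)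
                            (nonseparable_linked_off z EV2 ns2) e1 e2.
Qed.

Lemma block_edge_unique VB1 EB1 VB2 EB2 e :
  block inc setT setT VB1 EB1 -> block inc setT setT VB2 EB2 ->
  e \in EB1 -> e \in EB2 -> VB1 = VB2 /\ EB1 = EB2.
Proof.
move=> b1 b2 e1 e2; have EV1 := block_inc_sub b1; have EV2 := block_inc_sub b2.
case: b1 b2 => [[_ _ VB1n0 _] ns1 max1] [_ ns2 max2].
have EVU a : a \in EB1 :|: EB2 -> inc a \subset VB1 :|: VB2.
  by rewrite inE => /orP [/EV1|/EV2] /subset_trans; apply; rewrite ?subsetUl ?subsetUr.
have shU : subhyp inc setT setT (VB1 :|: VB2) (EB1 :|: EB2).
  apply: subhypT EVU; apply: contra VB1n0; rewrite -!subset0.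
  exact: subset_trans (subsetUl _ _).
have nsU := nonseparableU EV1 EV2 ns1 ns2 e1 e2.
have [<- <-] := max1 _ _ shU nsU (subsetUl _ _) (subsetUl _ _).
by have [-> ->] := max2 _ _ shU nsU (subsetUr _ _) (subsetUr _ _).
Qed.

Lemma walk_shorten VS ES u s : wf VS ES u s -> exists s',
  [/\ wf VS ES u s', last u (map snd s') = last u (map snd s),
      uniq (u :: map snd s') & {subset map fst s' <= map fst s}].
Proof.
elim: s u => [|[e v] s IH] u /=.
  by move=> _; exists [::].
case/and5P=> uv ue ve eE /andP [vV w].
have [s2 [w2 l2 u2 sub2]] := IH v w.
case: (boolP (u \in map snd s2)) => us2.
  pose ms := map snd s2; pose i := index u ms.
  have iS : i < size ms by rewrite index_mem.
  have ntu : nth v ms i = u by rewrite nth_index.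
  have ltk : last v (take i.+1 ms) = u by rewrite (take_nth v iS) last_rcons.
  move: w2; rewrite -[s2](cat_take_drop i.+1) walk_from_cat => /andP [_ w3].
  move: w3; rewrite map_take -/ms ltk => w3.
  exists (drop i.+1 s2); split => //.
  - rewrite -l2 -[in RHS](cat_take_drop i.+1 s2) map_cat last_cat map_take ltk.
    by rewrite map_drop.
  - move: u2; rewrite /= -/ms => /andP [_]; rewrite -[ms](cat_take_drop i.+1) cat_uniq.
    case/and3P=> _ hn ud; rewrite map_drop ud andbT.
    apply: contra hn => ud'; apply/hasP; exists u => //.
    by rewrite (take_nth v iS) mem_rcons inE ntu eqxx.
  - move=> a ad; rewrite inE; apply/orP; right; apply: sub2.
    by move: ad; rewrite map_drop; apply: mem_drop.
exists ((e, v) :: s2); split => //=.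
- by rewrite uv ue ve eE vV w2.
- by move: u2 => /= ->; rewrite inE negb_or uv us2.
- move=> a; rewrite !inE => /orP [->//|/sub2 ->]; by rewrite orbT.
Qed.

Lemma walk_from_edges VS ES (VS' : {set V}) (ES' : {set E}) u s : wf VS ES u s ->
  (forall e, e \in map fst s -> e \in ES' /\ inc e \subset VS') -> wf VS' ES' u s.
Proof.
elim: s u => [|[e v] s IH] u //=.
case/and5P=> uv ue ve eE /andP [vV w] H.
have [eE' sV] := H e (mem_head _ _).
rewrite uv ue ve eE' (subsetP sV v ve) /=; apply: IH w _ => a aS.
by apply: H; rewrite inE aS orbT.
Qed.

Lemma walk_from_edges_in VS ES u s : wf VS ES u s -> {subset map fst s <= ES}.
Proof.
elim: s u => [|[e v] s IH] u //= /and5P [_ _ _ eE /andP [_ /IH sub]] a.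
by rewrite inE => /orP [/eqP ->|/sub].
Qed.

Lemma trail_edges_sub VS ES T : closed_strict_trail inc VS ES T -> {subset wedges T <= ES}.
Proof. by case: T => v0 s [[_ w] _ _]; exact: walk_from_edges_in w. Qed.

Lemma walk_first_edge VS ES u s : wf VS ES u s -> last u (map snd s) != u ->
  exists e, e \in ES /\ u \in inc e.
Proof.
case: s => [|[e v] s] /=; first by rewrite eqxx.
by case/and5P=> _ ue _ eE _ _; exists e.
Qed.

Lemma walk_prefix_linked_off VS ES (ES' : {set E}) z u s g : wf VS ES u s ->
  {subset map fst s <= ES'} -> g \in ES' -> u \in inc g ->
  forall i, i < size s -> z \notin (u :: take i (map snd s)) ->
  connect (adj_off ES' z) g (nth g (map fst s) i).
Proof.
elim: s u g => [|[e v] s IH] u g //=.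
case/and5P=> uv ue ve eE /andP [vV w] sub gE ug i.
have eE' : e \in ES' by apply: sub; rewrite inE eqxx.
case: i => [|i] /=.
  rewrite inE => _ /negP nz; apply: connect1; apply: (adj_offI gE eE' _ ug ue).
  by apply/negP => /eqP uz; apply: nz; rewrite uz eqxx.
rewrite ltnS !inE negb_or => iS /andP [uz]; rewrite negb_or => /andP [vz nz].
have c1 : adj_off ES' z g e by apply: (adj_offI gE eE' _ ug ue); rewrite eq_sym.
apply: connect_trans (connect1 c1) _.
rewrite (set_nth_default e); last by rewrite size_map.
apply: (IH v e w _ eE' ve i iS); last by rewrite inE negb_or vz nz.
by move=> a aS; apply: sub; rewrite inE aS orbT.
Qed.

Lemma walk_suffix_linked_off VS ES (ES' : {set E}) z u s g : wf VS ES u s ->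
  {subset map fst s <= ES'} -> g \in ES' -> last u (map snd s) \in inc g ->
  forall i, i < size s -> z \notin drop i (map snd s) ->
  connect (adj_off ES' z) (nth g (map fst s) i) g.
Proof.
elim: s u g => [|[e v] s IH] u g //=.
case/and5P=> uv ue ve eE /andP [vV w] sub gE lg i.
have eE' : e \in ES' by apply: sub; rewrite inE eqxx.
have sub' : {subset map fst s <= ES'} by move=> a aS; apply: sub; rewrite inE aS orbT.
case: i => [|i] /=.
  rewrite inE negb_or => _ /andP [vz nz].
  case: s IH w lg sub sub' nz => [|[e' v'] s] IH w lg _ sub' nz /=.
    by apply: connect1; apply: (adj_offI eE' gE _ ve lg); rewrite eq_sym.
  have c := IH v g w sub' gE lg 0 (ltn0Sn _) nz.
  move: w => /= /and5P [_ ve' _ _ _].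
  have e'E : e' \in ES' by apply: sub'; rewrite inE eqxx.
  apply: connect_trans c; apply: connect1; apply: (adj_offI eE' e'E _ ve ve').
  by rewrite eq_sym.
rewrite ltnS => iS nz.
by apply: (IH v g w sub' gE lg i iS nz).
Qed.

Section Ear.
Variables (VB : {set V}) (EB : {set E}) (x : V) (s : seq (E * V)).
Hypotheses (EV : forall e, e \in EB -> inc e \subset VB) (nsB : nonseparable inc VB EB).
Hypotheses (ws : wf setT setT x s) (us : uniq (x :: map snd s)) (xB : x \in VB).
Hypotheses (yB : last x (map snd s) \in VB) (yx : last x (map snd s) != x).

Let PE := [set e | e \in map fst s].
Let EB' := EB :|: PE.
Let VB' := VB :|: \bigcup_(e in PE) inc e.

Lemma ear_inc_sub a : a \in EB' -> inc a \subset VB'.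
Proof.
rewrite inE => /orP [aB|aP]; first exact: subset_trans (EV aB) (subsetUl _ _).
by apply/subsetP => q qa; rewrite inE; apply/orP; right; apply/bigcupP; exists a.
Qed.

Let s_EB' : {subset map fst s <= EB'}.
Proof. by move=> a aS; rewrite !inE aS orbT. Qed.

Let ear_connected : connected inc VB' EB'.
Proof.
have [C _ _] := nsB.
have ws' : wf VB' EB' x s.
  by apply: (walk_from_edges ws) => a /s_EB' aE; split; last exact: ear_inc_sub.
have reach_x q : q \in VB' -> reach VB' EB' x q.
  rewrite inE => /orP [qB|/bigcupP [a aP qa]].
    exact: (reach_sub (subsetUl _ _) (subsetUl _ _) (connected_reach C xB qB)).
  by apply: (reach_walk_edge ear_inc_sub ws' _ qa); move: aP; rewrite inE.
have xB' : x \in VB' by rewrite inE xB.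
apply: reach_connected => u q uV qV; apply: reach_trans (reach_x q qV).
exact: reach_sym xB' (reach_x u uV).
Qed.

(* As the ear is a path, z misses the part of the ear before a given ear edge or
   the part after it; that part links the edge, avoiding z, to a block edge at
   the corresponding end of the ear. *)
Let ear_linked_off z : linked_off EB' z.
Proof.
have [C _ _] := nsB; pose y := last x (map snd s).
have [gx [gxB xgx]] : exists e, e \in EB /\ x \in inc e.
  have [s0 [w0 l0]] := connected_reach C xB yB.
  by apply: (walk_first_edge w0); rewrite l0.
have [gy [gyB ygy]] : exists e, e \in EB /\ y \in inc e.
  have [s0 [w0 l0]] := connected_reach C yB xB.
  by apply: (walk_first_edge w0); rewrite l0 eq_sym.
have [gxE gyE] : gx \in EB' /\ gy \in EB' by rewrite !inE gxB gyB.
have to_block a : a \in EB' -> exists2 g, g \in EB & connect (adj_off EB' z) a g.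
  rewrite inE => /orP [aB|]; first by exists a => //; exact: connect0.
  rewrite inE => aS; pose i := index a (map fst s).
  have iS : i < size s by rewrite -(size_map fst) index_mem.
  have nth_a : nth a (map fst s) i = a by rewrite nth_index.
  move: us; rewrite -(cat_take_drop i (map snd s)) -cat_cons cat_uniq => /and3P [_ dj _].
  case: (boolP (z \in drop i (map snd s))) => zd.
    have nz : z \notin x :: take i (map snd s) by apply: contra dj => zt; apply/hasP; exists z.
    have := walk_prefix_linked_off ws s_EB' gxE xgx iS nz.
    rewrite (set_nth_default a) ?size_map // nth_a => c.
    by exists gx => //; rewrite connect_adj_off_sym.
  have := walk_suffix_linked_off ws s_EB' gyE ygy iS zd.
  by rewrite (set_nth_default a) ?size_map // nth_a; exists gy.
move=> a b aE bE; have [ga gaB ca] := to_block a aE; have [gb gbB cb] := to_block b bE.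
apply: connect_trans ca _; rewrite connect_adj_off_sym in cb; apply: connect_trans _ cb.
exact: connect_adj_off_sub (subsetUl _ _) (nonseparable_linked_off z EV nsB gaB gbB).
Qed.

Lemma nonseparable_ear : nonseparable inc VB' EB'.
Proof. exact: linked_off_nonseparable ear_connected ear_linked_off. Qed.

End Ear.

Definition detour EB w u := exists P, [/\ wf setT setT w P, last w (map snd P) = u &
  forall e, e \in map fst P -> e \notin EB].

Lemma detour_trans EB a b c : detour EB a b -> detour EB b c -> detour EB a c.
Proof.
move=> [P1 [w1 l1 n1]] [P2 [w2 l2 n2]]; exists (P1 ++ P2); split.
- by rewrite walk_from_cat w1 l1 w2.
- by rewrite map_cat last_cat l1.
- by move=> e; rewrite map_cat mem_cat => /orP [/n1|/n2].
Qed.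

Lemma detour_edge EB g a b : g \notin EB -> a \in inc g -> b \in inc g -> detour EB a b.
Proof.
move=> gB ag bg; case: (eqVneq a b) => [->|ab]; first by exists [::].
exists [:: (g, b)]; split => //=; first by rewrite ab ag bg !inE.
by move=> e; rewrite inE => /eqP ->.
Qed.

(* A detour between distinct vertices of a block could be shortened to a path and
   added to the block as an ear, contradicting maximality. *)
Lemma block_detour_eq VB EB w u : block inc setT setT VB EB -> detour EB w u ->
  w \in VB -> u \in VB -> u = w.
Proof.
move=> bB [s [ws <- nE]] wB uB; apply/eqP/negPn/negP => uw.
have EV := block_inc_sub bB; case: bB => _ nsB maxB.
have [s' [ws' l' us' sub']] := walk_shorten ws; rewrite -l' in uB uw.
have sh : subhyp inc setT setT (VB :|: \bigcup_(e in [set e | e \in map fst s']) inc e)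
                               (EB :|: [set e | e \in map fst s']).
  by apply: subhypT (ear_inc_sub EV); apply/set0Pn; exists w; rewrite inE wB.
have nsB' := nonseparable_ear EV nsB ws' us' wB uB uw.
have [_ EBe] := maxB _ _ sh nsB' (subsetUl _ _) (subsetUl _ _).
have [e1 e1s'] : exists e1, e1 \in map fst s'.
  case: s' {ws' l' us' sub' sh nsB' EBe uB} uw => [|[e1 v1] t]; first by rewrite eqxx.
  by exists e1; rewrite mem_head.
have : e1 \in EB :|: [set e | e \in map fst s'] by rewrite !inE e1s' orbT.
by rewrite EBe; apply/negP; apply: nE; apply: sub'.
Qed.

Definition detoured VB EB x := exists w, [/\ w \in VB, w != x & detour EB w x].

Lemma path_adj_off_detoured VB EB x e2 p g : block inc setT setT VB EB ->
  path (adj_off setT x) g p -> last g p = e2 -> x \in inc e2 -> e2 \notin EB ->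
  (g \in EB -> detoured VB EB x) /\
  (g \notin EB -> forall y, y \in inc g -> detour EB y x \/ detoured VB EB x).
Proof.
move=> bB; have EV := block_inc_sub bB.
elim: p g => [|g' p IH] g /=.
  move=> _ <- xg gB; split; first by rewrite (negbTE gB).
  by move=> _ y yg; left; apply: (detour_edge gB).
case/andP=> r pp lp xe2 e2B.
have [IH1 IH2] := IH g' pp lp xe2 e2B.
case/adj_offP: r => _ _ [s [sx sg sg']].
split => [gB|gB y yg].
  case: (boolP (g' \in EB)) => g'B; first exact: IH1.
  case: (IH2 g'B s sg') => // nb.
  by exists s; split => //; apply: (subsetP (EV g gB)).
case: (boolP (g' \in EB)) => g'B; first by right; apply: IH1.
case: (IH2 g'B s sg') => [nb|]; last by right.
by left; apply: detour_trans nb; apply: (detour_edge gB).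
Qed.

(* Otherwise a chain of edges from g to h, consecutive ones sharing a vertex other
   than x, would yield a detour from a block vertex other than x to x. *)
Lemma block_boundary_not_connect VB EB x g h : block inc setT setT VB EB ->
  g \in EB -> h \notin EB -> x \in inc g -> x \in inc h -> ~~ connect (adj_off setT x) g h.
Proof.
move=> bB gB hB xg xh; apply/negP => /connectP [p pp lp].
have [Q1 _] := path_adj_off_detoured bB pp (esym lp) xh hB.
have [w [wV wx nb]] := Q1 gB.
have xV : x \in VB by apply: (subsetP (block_inc_sub bB gB)).
by move: wx; rewrite (block_detour_eq bB nb wV xV) eqxx.
Qed.

Definition rot1 (T : walk V E) : walk V E :=
  match T.2 with [::] => T | (e, v) :: s => (v, rcons s (e, v)) end.

Definition trail_rotation VS ES (T T' : walk V E) :=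
  [/\ closed_strict_trail inc VS ES T', anchors T' =i anchors T & perm_eq (wedges T') (wedges T)].

Lemma trail_rotation_refl VS ES T : closed_strict_trail inc VS ES T -> trail_rotation VS ES T T.
Proof. by move=> c; split. Qed.

Lemma trail_rotation_trans VS ES T1 T2 T3 :
  trail_rotation VS ES T1 T2 -> trail_rotation VS ES T2 T3 -> trail_rotation VS ES T1 T3.
Proof.
move=> [c2 a2 p2] [c3 a3 p3]; split => //; first by move=> q; rewrite a3 a2.
exact: perm_trans p3 p2.
Qed.

Lemma rot1_rotation VS ES T : closed_strict_trail inc VS ES T -> trail_rotation VS ES T (rot1 T).
Proof.
case: T => v0 [|[e1 v1] s1]; first by case=> _ [].
case=> [[v0V /= /and5P [u01 e10 e11 e1E /andP [v1V w1]]] [sz cl] st].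
rewrite /rot1 /=; move: cl; rewrite /wlast /= => cl.
split.
- split.
  + split => //=; rewrite -cats1 walk_from_cat w1 cl /= u01 e10 e11 e1E v1V //.
  + split; first by rewrite /= size_rcons.
    by rewrite /wlast /= map_rcons last_rcons.
  + move: st; rewrite /strict_trail /wedges /= map_rcons rcons_uniq => /andP [-> ->].
    by [].
- move=> q; rewrite /anchors /= map_rcons !inE mem_rcons inE.
  case: (eqVneq q v0) => [->|]; last by case: (q == v1).
  have h : v0 \in v1 :: map snd s1 by rewrite -{1}cl mem_last.
  by rewrite /=; move: h; rewrite inE => /orP [] ->; rewrite ?orbT.
- by rewrite /wedges /= map_rcons perm_rcons.
Qed.

Lemma rotate_to_edge VS ES T e : closed_strict_trail inc VS ES T -> e \in wedges T ->
  exists T', trail_rotation VS ES T T' /\ exists v s, T'.2 = (e, v) :: s.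
Proof.
move: {2}(index e (wedges T)) (erefl (index e (wedges T))) => n.
elim: n T => [|n IH] [v0 s]; case: s => [|[e1 v1] s1] ind c eT; try by move: eT.
- exists (v0, (e1, v1) :: s1); split; first exact: trail_rotation_refl.
  move: ind; rewrite /wedges /=; case: (eqVneq e1 e) => [->|] // _.
  by exists v1, s1.
- move: ind eT; rewrite /wedges /= inE eq_sym; case: (eqVneq e e1) => // ne [ind] es1.
  have r1 := rot1_rotation c; case: (r1) => c1 _ _; rewrite /= in es1.
  have i1 : index e (wedges (rot1 (v0, (e1, v1) :: s1))) = n.
    by rewrite /rot1 /wedges /= map_rcons -cats1 index_cat es1.
  have m1 : e \in wedges (rot1 (v0, (e1, v1) :: s1)).
    by rewrite /rot1 /wedges /= map_rcons mem_rcons inE es1 orbT.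
  have [T' [r2 hd]] := IH _ i1 c1 m1.
  by exists T'; split => //; exact: trail_rotation_trans r1 r2.
Qed.

Lemma rotate_to_anchor VS ES T a : closed_strict_trail inc VS ES T -> a \in anchors T ->
  exists T', trail_rotation VS ES T T' /\ T'.1 = a.
Proof.
move=> c aT.
have aT2 : a \in map snd T.2.
  case: T c aT => v0 s [_ [sz cl] _]; rewrite /anchors inE => /orP [/eqP ->|//].
  move: cl; rewrite /wlast /= => <-; case: s sz => // [[e v] s] _ /=.
  exact: mem_last.
move: {2}(index a (map snd T.2)) (erefl (index a (map snd T.2))) => n.
elim: n T c {aT} aT2 => [|n IH] [v0 s]; case: s => [|[e1 v1] s1] c aT2 ind; try by move: aT2.
- have r1 := rot1_rotation c; exists (rot1 (v0, (e1, v1) :: s1)); split => //.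
  by move: ind aT2; rewrite /rot1 /= inE; case: (eqVneq v1 a).
- move: ind aT2 => /=; rewrite inE; case: (eqVneq v1 a) => [->|ne] //= [ind] as1.
  have r1 := rot1_rotation c; case: (r1) => c1 _ _.
  have m1 : a \in map snd (rot1 (v0, (e1, v1) :: s1)).2.
    by rewrite /rot1 /= map_rcons mem_rcons inE as1 orbT.
  have i1 : index a (map snd (rot1 (v0, (e1, v1) :: s1)).2) = n.
    by rewrite /rot1 /= map_rcons -cats1 index_cat as1.
  have [T' [r2 hd]] := IH _ c1 m1 i1.
  by exists T'; split => //; exact: trail_rotation_trans r1 r2.
Qed.

(* Invariant: u is reached from w, the last block vertex visited, by a detour; by
   block_detour_eq the walk re-enters the block at w, so dropping the edges
   outside the block leaves a walk of the block. *)
Lemma walk_restrict_block VB EB s u w : block inc setT setT VB EB ->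
  wf setT setT u s -> detour EB w u -> w \in VB -> last u (map snd s) \in VB ->
  [/\ wf VB EB w [seq p <- s | p.1 \in EB],
      last w (map snd [seq p <- s | p.1 \in EB]) = last u (map snd s) &
      forall q, q \in u :: map snd s -> q \in VB -> q \in w :: map snd [seq p <- s | p.1 \in EB]].
Proof.
move=> bB; have EV := block_inc_sub bB.
elim: s u w => [|[e v] s IH] u w /=.
  move=> _ nb wV uV; have uw := block_detour_eq bB nb wV uV; subst u.
  by split => // q; rewrite inE => /eqP ->; rewrite inE eqxx.
case/and5P=> uv ue ve _ /andP [_ ws] nb wV lV.
case: (boolP (e \in EB)) => eB /=.
  have uV : u \in VB by apply: (subsetP (EV e eB)).
  have uw := block_detour_eq bB nb wV uV; subst u.
  have vV : v \in VB by apply: (subsetP (EV e eB)).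
  have nv : detour EB v v by exists [::].
  have [w1 l1 a1] := IH v v ws nv vV lV.
  split => //; first by rewrite uv ue ve eB vV.
  move=> q; rewrite inE => /orP [/eqP ->|qs] qV; first by rewrite mem_head.
  by rewrite inE a1 ?orbT.
have nv : detour EB w v := detour_trans nb (detour_edge eB ue ve).
have [w1 l1 a1] := IH v w ws nv wV lV.
split => // q; rewrite inE => /orP [/eqP ->|qs] qV.
  by rewrite (block_detour_eq bB nb wV qV) mem_head.
exact: a1.
Qed.

Lemma trail_restrict_block VB EB T e0 : block inc setT setT VB EB ->
  closed_strict_trail inc setT setT T -> e0 \in wedges T -> e0 \in EB ->
  exists R, [/\ closed_strict_trail inc VB EB R,
    (forall e, e \in EB -> (e \in wedges R) = (e \in wedges T)),
    {subset anchors R <= anchors T} &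
    forall q, q \in anchors T -> q \in VB -> q \in anchors R].
Proof.
move=> bB c e0T e0B; have EV := block_inc_sub bB.
have [[v0 s] [[c' an pe] [v1 [s1 hd]]]] := rotate_to_edge c e0T.
rewrite /= in hd; subst s.
case: c' => [[_ /= /and5P [u01 e00 e01 _ /andP [_ w1]]] [_ cl] st].
have v0V : v0 \in VB by apply: (subsetP (EV e0 e0B)).
have w0 : wf setT setT v0 ((e0, v1) :: s1) by rewrite /= u01 e00 e01 !inE w1.
have nb : detour EB v0 v0 by exists [::].
have lV : last v0 (map snd ((e0, v1) :: s1)) \in VB by move: cl; rewrite /wlast /= => ->.
have [wr lr ar] := walk_restrict_block bB w0 nb v0V lV.
set F := [seq p <- (e0, v1) :: s1 | p.1 \in EB] in wr lr ar.
have Fe : forall e, (e \in map fst F) = (e \in EB) && (e \in map fst ((e0, v1) :: s1)).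
  by move=> e; rewrite /F -filter_map mem_filter.
exists (v0, F); split.
- split; first by split.
  + split; last by rewrite /wlast /= lr; move: cl; rewrite /wlast.
    rewrite /F /= e0B /=; case E1: [seq p <- s1 | p.1 \in EB] => [|p t] //.
    move: lr; rewrite /F /= e0B E1 /= => lr.
    by move: cl; rewrite /wlast /= -lr => /eqP; rewrite eq_sym (negbTE u01).
  + by rewrite /strict_trail /wedges /= /F -filter_map filter_uniq.
- move=> e eB; rewrite /wedges /= Fe eB /=.
  exact: (perm_mem pe e).
- move=> q; rewrite /anchors /= inE => /orP [/eqP ->|qF].
    by rewrite -an mem_head.
  rewrite -an inE; apply/orP; right.
  exact: (mem_subseq (map_subseq snd (filter_subseq _ _)) qF).
- by move=> q qT qV; rewrite -an in qT; apply: ar.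
Qed.

Definition anchor_disjoint (w1 w2 : walk V E) := ~~ has (fun x => x \in anchors w2) (anchors w1).

Lemma anchor_disjoint_sub (w1 w2 f1 f2 : walk V E) : {subset anchors w1 <= anchors f1} ->
  {subset anchors w2 <= anchors f2} -> anchor_disjoint f1 f2 -> anchor_disjoint w1 w2.
Proof.
move=> s1 s2 d; apply/hasPn => x xw1; apply/negP => xw2.
by move/hasPn: d => /(_ x (s1 x xw1)); rewrite (s2 x xw2).
Qed.

Lemma trails_restrict_block VB EB (F : seq (walk V E)) : block inc setT setT VB EB ->
  (forall w, w \in F -> closed_strict_trail inc setT setT w) -> pairwise anchor_disjoint F ->
  exists G : seq (walk V E), [/\ forall g : walk V E, g \in G -> closed_strict_trail inc VB EB g,
    forall e, e \in EB -> count (fun w => e \in wedges w) G = count (fun w => e \in wedges w) F,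
    pairwise anchor_disjoint G &
    forall g : walk V E, g \in G -> exists2 f, f \in F & {subset anchors g <= anchors f}].
Proof.
move=> bB; elim: F => [|t F IH] cF pF.
  by exists [::]; split.
move: pF; rewrite pairwise_cons => /andP [/allP dt pF].
have [G [cG nG pG sG]] := IH (fun w wF => cF w (@mem_behead _ (t :: F) _ wF)) pF.
case: (boolP (has (fun e => e \in EB) (wedges t))) => [/hasP [e0 e0t e0B]|nt].
  have [R [cR eR aR _]] := trail_restrict_block bB (cF t (mem_head _ _)) e0t e0B.
  exists (R :: G); split.
  - by move=> g; rewrite inE => /orP [/eqP ->|/cG].
  - by move=> e eB /=; rewrite nG // eR.
  - rewrite pairwise_cons pG andbT; apply/allP => g gG.
    have [f fF sf] := sG g gG.
    exact: (anchor_disjoint_sub aR sf (dt f fF)).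
  - move=> g; rewrite inE => /orP [/eqP ->|/sG [f fF sf]].
      by exists t; rewrite ?mem_head.
    by exists f; rewrite ?inE ?fF ?orbT.
exists G; split => //.
- move=> e eB /=; rewrite nG //.
  by case: (boolP (e \in wedges t)) => // et; move/hasPn: nt => /(_ e et); rewrite eB.
- by move=> g /sG [f fF sf]; exists f; rewrite ?inE ?fF ?orbT.
Qed.

Lemma block_euler_family : has_euler_family inc setT setT ->
  forall VB EB, block inc setT setT VB EB -> has_euler_family inc VB EB.
Proof.
move=> [F [cF nF pF]] VB EB bB.
have [G [cG nG pG _]] := trails_restrict_block bB cF pF.
exists G; split => // e eB; rewrite nG // nF //; exact: in_setT.
Qed.

Lemma walk_linked_off VS ES (ES' : {set E}) z e1 v1 s :
  wf VS ES v1 s -> {subset map fst s <= ES'} -> e1 \in ES' -> v1 \in inc e1 ->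
  z \notin v1 :: map snd s -> forall e, e \in map fst s -> connect (adj_off ES' z) e1 e.
Proof.
elim: s e1 v1 => [|[e v] s IH] e1 v1 //= /and5P [_ ue ve _ /andP [_ w]] sub e1E ve1.
rewrite !inE !negb_or => /and3P [vz1 vz nz] a.
have eE : e \in ES' by apply: sub; rewrite mem_head.
have c1 : adj_off ES' z e1 e by apply: (adj_offI e1E eE _ ve1 ue); rewrite eq_sym.
rewrite inE => /orP [/eqP ->|aS]; first exact: connect1.
apply: connect_trans (connect1 c1) _; apply: (IH e v w _ eE ve) => //.
  by move=> b bS; apply: sub; rewrite inE bS orbT.
by rewrite inE negb_or vz.
Qed.

Lemma separatingT v : connected inc setT setT ->
  separating inc setT setT v <-> separating_conn inc setT setT v.
Proof.
move=> C.
have compT x : x \in [set: V] <-> x \in [set: V] /\ (x = v \/ joined inc setT setT v x).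
  split=> [_|[]//]; split=> //; case: (eqVneq x v) => [->|xv]; [by left | right].
  by apply: C; rewrite ?in_setT // eq_sym.
have edgesT (Cs : {set V}) : Cs = setT -> [set e in setT | inc e \subset Cs] = setT.
  by move=> ->; apply/setP => e; rewrite !inE subsetT.
split=> [[_ [Cs [HC S]]]|S]; last by split; [exact: in_setT | exists setT; rewrite edgesT].
have eC : Cs = setT.
  by apply/setP => x; rewrite inE; apply/(HC x); apply: (compT x).1; exact: in_setT.
by rewrite (edgesT _ eC) eC in S.
Qed.

(* An edgeless block is a single vertex v; as the hypergraph is connected and has
   the edge e, v lies in some edge g, and (inc g, [set g]) is a larger
   non-separable hypersubgraph. *)
Lemma block_edges_neq0 VB EB (e : E) : connected inc setT setT ->
  block inc setT setT VB EB -> EB != set0.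
Proof.
move=> C bB; apply/negP => /eqP EB0.
case: (bB) => [[_ _ n _] [CB _ _] M].
case/set0Pn: n => v vB.
have [g vg] : exists g, v \in inc g.
  case/set0Pn: (Hnoempty e) => y ye.
  case: (eqVneq v y) => [->|vy]; first by exists e.
  have [s [w l]] := connected_reach C (in_setT v) (in_setT y).
  have h : last v (map snd s) != v by rewrite l eq_sym.
  by have [g [_ vg]] := walk_first_edge w h; exists g.
have VBv : VB \subset inc g.
  apply/subsetP => x xB; case: (eqVneq x v) => [->//|xv].
  have [s [w l]] := connected_reach CB vB xB.
  have h : last v (map snd s) != v by rewrite l.
  have [a [aE _]] := walk_first_edge w h.
  by rewrite EB0 inE in aE.
have sh : subhyp inc setT setT (inc g) [set g].
  by apply: subhypT => // a; rewrite inE => /eqP ->.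
have sE : EB \subset [set g] by rewrite EB0 sub0set.
have [_ h] := M _ _ sh (nonseparable_edge g) VBv sE.
by move: EB0; rewrite -h => /setP /(_ g); rewrite !inE eqxx.
Qed.

Lemma euler_tour_linked_off VS ES T z : euler_tour inc VS ES T -> z \notin anchors T ->
  linked_off ES z.
Proof.
case: T => v0 s [[[_ w] [sz _] _] allT].
case: s w sz allT => [|[e1 v1] s1] //= /and5P [_ _ ve1 e1E /andP [_ w1]] _ allT.
rewrite /anchors /= inE negb_or => /andP [_ zT].
have to_e e : e \in ES -> connect (adj_off ES z) e1 e.
  move=> /allT; rewrite /wedges inE => /orP [/eqP ->|es]; first exact: connect0.
  exact: walk_linked_off w1 (walk_from_edges_in w1) e1E ve1 zT e es.
move=> a b /to_e ea /to_e eb; rewrite connect_adj_off_sym in ea; exact: connect_trans ea eb.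
Qed.

Lemma block_euler_tour : connected inc setT setT -> has_euler_tour inc setT setT ->
  forall VB EB, block inc setT setT VB EB ->
    exists w, euler_tour inc VB EB w /\
      (forall v, v \in VB -> separating inc setT setT v -> v \in anchors w).
Proof.
move=> C [T tourT] VB EB bB; have [cT allT] := tourT.
have [e1 _] : exists e1, e1 \in wedges T.
  by case: T {tourT allT} cT => ? [|[e ?] ?] [_ []] //; exists e; rewrite /wedges mem_head.
case/set0Pn: (block_edges_neq0 e1 C bB) => e0 e0B.
have [R [cR eR _ anchorsR]] := trail_restrict_block bB cT (allT e0 (in_setT _)) e0B.
exists R; split; first by split => // e eB; rewrite eR // allT // in_setT.
move=> v vB /(separatingT v C) S; apply: anchorsR => //; apply/negPn/negP => vT.
exact: separating_conn_not_linked_off S (euler_tour_linked_off tourT vT).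
Qed.

Local Notation trailT := (closed_strict_trail inc setT setT).
Definition ecount e (L : seq (walk V E)) := count (fun w => e \in wedges w) L.
Definition subtrail (t T : walk V E) :=
  {subset anchors t <= anchors T} /\ {subset wedges t <= wedges T}.

Lemma subtrail_refl t : subtrail t t. Proof. by split. Qed.
Lemma subtrail_trans t1 t2 t3 : subtrail t1 t2 -> subtrail t2 t3 -> subtrail t1 t3.
Proof. by move=> [a1 e1] [a2 e2]; split => x h; [exact: a2 (a1 x h) | exact: e2 (e1 x h)]. Qed.

Lemma anchor_disjoint_sym t1 t2 : anchor_disjoint t1 t2 = anchor_disjoint t2 t1.
Proof.
by apply/idP/idP => /hasPn h; apply/hasPn => x xa; apply/negP => xb; move: (h x xb); rewrite xa.
Qed.

Lemma pairwise_in (r : rel (walk V E)) L a b : pairwise r L -> a \in L -> b \in L -> a != b ->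
  r a b || r b a.
Proof.
elim: L => [|c L IH] //; rewrite pairwise_cons => /andP [/allP ac pL].
rewrite !inE => /orP [/eqP ->|aL] /orP [/eqP ->|bL] ab.
- by rewrite eqxx in ab.
- by rewrite ac.
- by rewrite ac ?orbT.
- exact: IH.
Qed.

Lemma trail_splice T1 T2 a : trailT T1 -> trailT T2 -> a \in anchors T1 -> a \in anchors T2 ->
  (forall e, e \in wedges T1 -> e \notin wedges T2) ->
  exists T, [/\ trailT T, anchors T =i anchors T1 ++ anchors T2 &
    forall e, (e \in wedges T) = (e \in wedges T1) || (e \in wedges T2)].
Proof.
move=> c1 c2 a1 a2 dj.
have [[x1 s1] [[c1' an1 pe1] h1]] := rotate_to_anchor c1 a1.
have [[x2 s2] [[c2' an2 pe2] h2]] := rotate_to_anchor c2 a2.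
rewrite /= in h1 h2; subst x1 x2.
case: c1' => [[_ w1] [sz1 l1] u1]; case: c2' => [[_ w2] [sz2 l2] u2].
rewrite /wlast /= in l1 l2.
exists (a, s1 ++ s2); split.
- split.
  + by split => //; rewrite walk_from_cat w1 l1 w2.
  + split; first by rewrite /= size_cat (leq_trans sz1) // leq_addr.
    by rewrite /wlast /= map_cat last_cat l1 l2.
  + rewrite /strict_trail /wedges /= map_cat cat_uniq u1 u2 andbT /=.
    apply/hasPn => e e2; apply/negP => e1.
    have := dj e; rewrite -(perm_mem pe1) -(perm_mem pe2) => /(_ e1).
    by rewrite /wedges /= e2.
- move=> q; rewrite mem_cat -an1 -an2 /anchors /= map_cat !inE mem_cat.
  by case: (q == a); rewrite /= ?orbT.
- move=> e; rewrite -(perm_mem pe1) -(perm_mem pe2) /wedges /= map_cat mem_cat.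
  by [].
Qed.

Lemma trail_splice_all t (G1 : seq (walk V E)) : trailT t ->
  (forall g : walk V E, g \in G1 -> trailT g /\ ~~ anchor_disjoint t g) ->
  (forall e, e \in wedges t -> ecount e G1 = 0) -> (forall e, ecount e G1 <= 1) ->
  exists T, [/\ trailT T, subtrail t T, (forall g : walk V E, g \in G1 -> subtrail g T),
    (forall e, (e \in wedges T) = (e \in wedges t) || (ecount e G1 != 0)) &
    forall x, x \in anchors T ->
      x \in anchors t \/ exists2 g : walk V E, g \in G1 & x \in anchors g].
Proof.
move=> ct; elim: G1 => [|g G1 IH] HG d1 c1.
  exists t; split => //; first exact: subtrail_refl.
  - by move=> e; rewrite /ecount /= orbF.
  - by move=> x; left.
have HG' : forall g' : walk V E, g' \in G1 -> trailT g' /\ ~~ anchor_disjoint t g'.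
  by move=> g' g'G; apply: HG; rewrite inE g'G orbT.
have d1' : forall e, e \in wedges t -> ecount e G1 = 0.
  by move=> e et; move: (d1 e et); rewrite /ecount /=; case: (e \in wedges g).
have c1' : forall e, ecount e G1 <= 1.
  by move=> e; move: (c1 e); rewrite /ecount /=; case: (e \in wedges g) => //= /ltnW.
have [T' [cT' st sG eT' aT']] := IH HG' d1' c1'.
have [cg ndg] := HG g (mem_head _ _).
have [b bt bg] : exists2 b, b \in anchors t & b \in anchors g.
  by move: ndg; rewrite negbK => /hasP [b bt bg]; exists b.
have djT : forall e, e \in wedges T' -> e \notin wedges g.
  move=> e; rewrite eT' => /orP [et|ne]; apply/negP => eg.
    by move: (d1 e et); rewrite /ecount /= eg.
  by move: (c1 e); rewrite /ecount /= eg add1n ltnS leqn0 -/(ecount e G1) (negbTE ne).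
have [T [cT aT eT]] := trail_splice cT' cg (st.1 b bt) bg djT.
exists T; split => //.
- apply: subtrail_trans st _; split => x; first by rewrite aT mem_cat => ->.
  by rewrite eT => ->.
- move=> g'; rewrite inE => /orP [/eqP ->|g'G].
    by split => x; [rewrite aT mem_cat orbC => -> | rewrite eT orbC => ->].
  apply: subtrail_trans (sG g' g'G) _; split => x; first by rewrite aT mem_cat => ->.
  by rewrite eT => ->.
- move=> e; rewrite eT eT' /ecount /=; case: (e \in wedges g); rewrite /= ?orbT //.
  by rewrite orbF.
- move=> x; rewrite aT mem_cat => /orP [/aT' [->|[g' g'G xg']]|xg].
  + by left.
  + by right; exists g' => //; rewrite inE g'G orbT.
  + by right; exists g => //; rewrite mem_head.
Qed.

Lemma count_filter_split (T : Type) (P Q : pred T) (L : seq T) :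
  count P [seq x <- L | Q x] + count P [seq x <- L | ~~ Q x] = count P L.
Proof.
elim: L => [|a L IH] //=; case: (Q a) => /=; first by rewrite -addnA IH.
by rewrite addnCA IH.
Qed.

Lemma count_filter_le (T : Type) (P Q : pred T) (L : seq T) :
  count P [seq x <- L | Q x] <= count P L.
Proof. by rewrite -(count_filter_split P Q L) leq_addr. Qed.

(* The trails of [G] sharing an anchor with [t] are spliced into [t]; the others
   are kept, and stay anchor-disjoint from the spliced trail. *)
Lemma trail_merge_one t (G : seq (walk V E)) :
  trailT t -> (forall g : walk V E, g \in G -> trailT g) ->
  pairwise anchor_disjoint G -> (forall e, e \in wedges t -> ecount e G = 0) ->
  (forall e, ecount e G <= 1) ->
  exists G' : seq (walk V E), [/\ forall T, T \in G' -> trailT T,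
    forall e, ecount e G' = (e \in wedges t) + ecount e G, pairwise anchor_disjoint G' &
    forall g : walk V E, g \in t :: G -> exists2 T, T \in G' & subtrail g T].
Proof.
move=> ct cG pG d0 c1.
pose G1 := [seq g <- G | ~~ anchor_disjoint t g].
pose G2 := [seq g <- G | anchor_disjoint t g].
have sp e : ecount e G2 + ecount e G1 = ecount e G by exact: count_filter_split.
have d1 e : e \in wedges t -> ecount e G1 = 0.
  by move=> et; apply/eqP; rewrite -leqn0 -(d0 e et); exact: count_filter_le.
have c1' e : ecount e G1 <= 1 by apply: leq_trans (c1 e); exact: count_filter_le.
have HG (g : walk V E) : g \in G1 -> trailT g /\ ~~ anchor_disjoint t g.
  by rewrite mem_filter => /andP [h gG]; split => //; apply: cG.
have [T [cT st sG1 eT aT]] := trail_splice_all ct HG d1 c1'.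
exists (T :: G2); split.
- move=> T'; rewrite inE => /orP [/eqP ->//|]; rewrite mem_filter => /andP [_]; exact: cG.
- move=> e; rewrite -(sp e) [ecount e (T :: G2)]/ecount /= -/(ecount e G2) eT.
  case: (boolP (e \in wedges t)) => et /=; first by rewrite d1 // addn0.
  by rewrite add0n addnC; case: (ecount e G1) (c1' e) => [|[|]].
- rewrite pairwise_cons (pairwise_filter _ pG) andbT; apply/allP => g.
  rewrite mem_filter => /andP [dg gG]; apply/hasPn => x xT; apply/negP => xg.
  case: (aT x xT) => [xt|[g1 g1G xg1]].
    by move/hasPn: dg => /(_ x xt); rewrite xg.
  move: g1G; rewrite mem_filter => /andP [ng1 g1G].
  have neq : g1 != g by apply: contraNneq ng1 => ->.
  have := pairwise_in pG g1G gG neq; rewrite (anchor_disjoint_sym g g1) orbb.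
  by move=> /hasPn /(_ x xg1); rewrite xg.
- move=> g; rewrite inE => /orP [/eqP ->|gG]; first by exists T; rewrite ?mem_head.
  case: (boolP (anchor_disjoint t g)) => dg.
    by exists g; [rewrite inE mem_filter dg gG orbT | exact: subtrail_refl].
  by exists T; [rewrite mem_head | apply: sG1; rewrite mem_filter dg].
Qed.

Lemma trails_merge (L : seq (walk V E)) : (forall t, t \in L -> trailT t) ->
  (forall e, ecount e L <= 1) ->
  exists L' : seq (walk V E), [/\ forall T, T \in L' -> trailT T,
    forall e, ecount e L' = ecount e L, pairwise anchor_disjoint L' &
    forall t, t \in L -> exists2 T, T \in L' & subtrail t T].
Proof.
elim: L => [|t L IH] cL c1; first by exists [::]; split.
have cL0 t' : t' \in L -> trailT t' by move=> tL; apply: cL; rewrite inE tL orbT.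
have c10 e : ecount e L <= 1.
  by move: (c1 e); rewrite /ecount /=; case: (e \in wedges t) => //= /ltnW.
have [G [cG nG pG sG]] := IH cL0 c10.
have d0 e : e \in wedges t -> ecount e G = 0.
  by move=> et; move: (c1 e); rewrite /ecount /= et add1n ltnS leqn0 -/(ecount e L) -nG => /eqP.
have c1G e : ecount e G <= 1 by rewrite nG.
have [G' [cG' nG' pG' sG']] := trail_merge_one (cL t (mem_head _ _)) cG pG d0 c1G.
exists G'; split => //; first by move=> e; rewrite nG' nG.
move=> t'; rewrite inE => /orP [/eqP ->|t'L]; first exact: sG' (mem_head _ _).
have [g gG sg] := sG t' t'L.
have [T TG' gT] : exists2 T, T \in G' & subtrail g T by apply: sG'; rewrite inE gG orbT.
by exists T => //; exact: subtrail_trans sg gT.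
Qed.

Lemma trailT_of VS ES T : closed_strict_trail inc VS ES T -> trailT T.
Proof.
case: T => v0 s [[v0V w] c st]; split => //; split; first exact: in_setT.
by apply: walk_from_sub w; apply: subsetT.
Qed.

Lemma ecount1_eq e (L : seq (walk V E)) a b : ecount e L = 1 -> a \in L -> b \in L ->
  e \in wedges a -> e \in wedges b -> a = b.
Proof.
rewrite /ecount -size_filter => cnt1 aL bL ea eb.
have : b \in [seq w <- L | e \in wedges w] by rewrite mem_filter eb.
have : a \in [seq w <- L | e \in wedges w] by rewrite mem_filter ea.
by case: [seq w <- L | _] cnt1 => [|c [|]] // _; rewrite !inE => /eqP -> /eqP ->.
Qed.

Definition is_block (p : {set V} * {set E}) : bool :=
  if excluded_middle_informative (block inc setT setT p.1 p.2) then true else false.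

Lemma is_blockP p : reflect (block inc setT setT p.1 p.2) (is_block p).
Proof. by rewrite /is_block; case: excluded_middle_informative => h; constructor. Qed.

Definition blocks := enum [pred p | is_block p].

Lemma mem_blocks p : (p \in blocks) = is_block p.
Proof. by rewrite mem_enum inE. Qed.

Lemma count_blocks_edge e : count (fun p : {set V} * {set E} => e \in p.2) blocks = 1.
Proof.
have [VB [EB [bB eB]]] := block_of_edge e.
have -> : count (fun p : {set V} * {set E} => e \in p.2) blocks = count_mem (VB, EB) blocks.
  apply: eq_in_count => -[VB' EB']; rewrite mem_blocks => /is_blockP /= bB'.
  apply/idP/eqP => [eB'|[_ ->] //].
  by have [-> ->] := block_edge_unique bB' bB eB' eB.
by rewrite count_uniq_mem ?enum_uniq // mem_blocks (introT (is_blockP (VB, EB)) bB).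
Qed.

Lemma block_choice (T : Type) (P : {set V} -> {set E} -> T -> Prop) (x0 : T) :
  (forall VB EB, block inc setT setT VB EB -> exists w, P VB EB w) ->
  exists f : {set V} * {set E} -> T, forall p, is_block p -> P p.1 p.2 (f p).
Proof.
move=> H; apply: (@fin_all_exists _ (fun=> T) (fun p w => is_block p -> P p.1 p.2 w)) => p.
case: (is_blockP p) => [bp|_]; last by exists x0.
by have [w hw] := H _ _ bp; exists w.
Qed.

Lemma euler_family_of_blocks :
  (forall VB EB, block inc setT setT VB EB -> has_euler_family inc VB EB) ->
  has_euler_family inc setT setT.
Proof.
move=> H; have [fam famP] := block_choice [::] H.
pose L := flatten (map fam blocks).
have cL t : t \in L -> trailT t.
  case/flattenP => F /mapP [p pB ->] tF; rewrite mem_blocks in pB.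
  by have [cF _ _] := famP p pB; exact: trailT_of (cF t tF).
have nL e : ecount e L = 1.
  rewrite /ecount count_flatten -map_comp -(count_blocks_edge e) -sumn_count.
  congr sumn; apply/eq_in_map => p; rewrite mem_blocks => pB /=.
  have [cF nF _] := famP p pB.
  case: (boolP (e \in p.2)) => ep; first by rewrite nF.
  rewrite (eq_in_count (a2 := pred0)) ?count_pred0 // => t tF /=.
  by apply: contraNF ep => /(trail_edges_sub (cF t tF)).
have [L' [cL' nL' pL' _]] := trails_merge cL (fun e => eq_leq (nL e)).
by exists L'; split => // e _; have := nL' e; rewrite nL.
Qed.

Lemma block_boundary_separating VB EB x g h : connected inc setT setT ->
  block inc setT setT VB EB -> g \in EB -> h \notin EB -> x \in inc g -> x \in inc h ->
  separating inc setT setT x.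
Proof.
move=> C bB gB hB xg xh; apply/(separatingT x C).
have EVT e : e \in [set: E] -> inc e \subset [set: V] by move=> _; exact: subsetT.
exact: not_linked_off_separating_conn EVT C (in_setT g) (in_setT h)
  (block_boundary_not_connect bB gB hB xg xh).
Qed.

Definition absorbs (T : walk V E) VB EB :=
  {subset EB <= wedges T} /\ forall v, v \in VB -> separating inc setT setT v -> v \in anchors T.

(* Leaving the trail [T1] along a walk crosses from an edge of [T1] to an edge of
   another trail at a common vertex; the blocks of these two edges are absorbed by
   different trails, yet the vertex is separating and so an anchor of both. *)
Lemma absorbing_trail_covers (L : seq (walk V E)) T1 e0 : connected inc setT setT ->
  pairwise anchor_disjoint L -> (forall e, ecount e L = 1) ->
  (forall e, exists VB EB,
     [/\ block inc setT setT VB EB, e \in EB & exists2 T, T \in L & absorbs T VB EB]) ->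
  T1 \in L -> e0 \in wedges T1 -> forall e, e \in wedges T1.
Proof.
move=> C pL nL absL T1L e0T1 e2; apply/negPn/negP => e2T1.
case/set0Pn: (Hnoempty e0) => a ae0; case/set0Pn: (Hnoempty e2) => b be2.
have [s [w l]] := connected_reach C (in_setT a) (in_setT b).
pose S := [set e | e \in wedges T1].
have e0S : e0 \in S by rewrite inE.
have e2S : e2 \notin S by rewrite inE.
have bS : last a (map snd s) \in inc e2 by rewrite l.
have [x [g [h [gT1 _ hT1 xg xh]]]] := walk_boundary_edges w e0S ae0 (in_setT e2) e2S bS.
rewrite !inE in gT1 hT1.
have [VB1 [EB1 [bB1 gB1 [T TL [sub1 sp1]]]]] := absL g.
have TT1 : T = T1 := ecount1_eq (nL g) TL T1L (sub1 g gB1) gT1.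
have [VB2 [EB2 [bB2 hB2 [T2 T2L [sub2 sp2]]]]] := absL h.
have hB1 : h \notin EB1 by apply: contra hT1 => /sub1; rewrite TT1.
have sx := block_boundary_separating C bB1 gB1 hB1 xg xh.
have x1 : x \in anchors T1.
  by rewrite -TT1; apply: sp1 sx; exact: subsetP (block_inc_sub bB1 gB1) x xg.
have x2 : x \in anchors T2 by apply: sp2 sx; exact: subsetP (block_inc_sub bB2 hB2) x xh.
have T12 : T1 != T2 by apply: contraNneq hT1 => ->; exact: sub2.
by case/orP: (pairwise_in pL T1L T2L T12) => /hasPn dj;
  [move: (dj x x1); rewrite x2 | move: (dj x x2); rewrite x1].
Qed.

Lemma euler_tour_of_blocks : 0 < #|V| -> connected inc setT setT ->
  (forall VB EB, block inc setT setT VB EB ->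
    exists w, euler_tour inc VB EB w /\
      (forall v, v \in VB -> separating inc setT setT v -> v \in anchors w)) ->
  has_euler_tour inc setT setT.
Proof.
move=> /card_gt0P [v0 _] C H; have [tour tourP] := block_choice (v0, [::]) H.
pose L := map tour blocks.
have cL t : t \in L -> trailT t.
  case/mapP => p pB ->; rewrite mem_blocks in pB.
  by have [[ct _] _] := tourP p pB; exact: trailT_of ct.
have nL e : ecount e L = 1.
  rewrite /ecount count_map -(count_blocks_edge e); apply: eq_in_count => p.
  rewrite mem_blocks => pB /=; have [[ct cov] _] := tourP p pB.
  by apply/idP/idP => [/(trail_edges_sub ct)|/cov].
have [L' [cL' nL' pL' sL']] := trails_merge cL (fun e => eq_leq (nL e)).
have nL1 e : ecount e L' = 1 by rewrite nL'.
have absL e : exists VB EB,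
    [/\ block inc setT setT VB EB, e \in EB & exists2 T, T \in L' & absorbs T VB EB].
  have [VB [EB [bB eB]]] := block_of_edge e.
  have pB : is_block (VB, EB) by apply/is_blockP.
  have [[_ cov] sp] := tourP _ pB.
  have [T TL [sa se]] := sL' (tour (VB, EB)) (map_f _ (etrans (mem_blocks _) pB)).
  by exists VB, EB; split => //; exists T => //; split => [a /cov/se | v vB /(sp v vB)/sa].
have [e0 [T1 T1L e0T1]] : exists e0, exists2 T1, T1 \in L' & e0 \in wedges T1.
  have [VB0 [EB0 [bB0 _]]] := block_of_vertex v0.
  have [[[_ [tour2 _] _] _] _] := tourP (VB0, EB0) (introT (is_blockP (VB0, EB0)) bB0).
  case: (tour (VB0, EB0)) tour2 => _ [|[e0 _] _] // _; exists e0.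
  by apply/hasP; rewrite has_count; have := nL1 e0; rewrite /ecount => ->.
exists T1; split; first exact: cL'.
by move=> e _; exact: absorbing_trail_covers C pL' nL1 absL T1L e0T1 e.
Qed.

End Hypergraph.

Theorem theorem2p21 (V E : finType) (inc : E -> {set V})
  (HV : 0 < #|V|) (Hnoempty : forall e, inc e != set0) :
  (has_euler_family inc setT setT <->
     (forall VB EB, block inc setT setT VB EB -> has_euler_family inc VB EB))
  /\
  (connected inc setT setT ->
     (has_euler_tour inc setT setT <->
       (forall VB EB, block inc setT setT VB EB ->
          exists w, euler_tour inc VB EB w /\
            (forall v, v \in VB -> separating inc setT setT v -> v \in anchors w)))).
Proof.
split; first by split; [exact: block_euler_family | exact: euler_family_of_blocks].
by move=> C; split; [exact: block_euler_tour | exact: euler_tour_of_blocks].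
Qed.
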